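(* Let $G$ be a finite claw-free graph. Then its modular decomposition tree $T(G)$ has at most 5 layers, i.e. every path from the root to a leaf contains at most 5 nodes (the root being in layer 1).
   Context: A claw is an induced subgraph isomorphic to $K_{1,3}$. A module of $G=(V,E)$ is a set $M\subseteq V$ such that every vertex outside $M$ is adjacent either to all or to none of $M$. A graph is prime if it has at least 4 vertices and only the modules $\emptyset$, singletons and $V$. Modular decomposition (Gallai): exactly one holds: (single) $G$ is one vertex; (parallel) $G$ is disconnected; (serial) the complement of $G$ is disconnected; (prime) $G$ and its complement are connected, $|V|\ge4$, and the maximal proper modules partition $V$ into $P$ with $G/P$ prime. The tree $T(G)$ is defined recursively: single case a leaf; parallel case a root labelled ''parallel'' with children $T(G[C])$ for the connected components $C$ of $G$; serial case a root labelled ''serial'' with children $T(G[C])$ for the connected components $C$ of the complement; prime case a root labelled ''prime'' with children $T(G[M])$, $M\in P$. *)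

(* Finite simple graph: T : finType, e : rel T symmetric, irreflexive. *)
From mathcomp Require Import all_boot.
Set Implicit Arguments. Unset Strict Implicit. Unset Printing Implicit Defensive.

Section Graphs.
Variable T : finType.

Definition claw_free (e : rel T) : Prop :=
  ~ exists a b c d : T,
      [/\ e a b, e a c, e a d,
          [&& b != c, b != d & c != d] &
          [&& ~~ e b c, ~~ e b d & ~~ e c d]].

Definition compl_rel (e : rel T) : rel T := fun x y => (x != y) && ~~ e x y.

Definition induced (e : rel T) (S : {set T}) : rel T :=
  fun x y => [&& x \in S, y \in S & e x y].

Definition connected_in (e : rel T) (S : {set T}) : bool :=
  [forall x in S, forall y in S, connect (induced e S) x y].

Definition component_of (e : rel T) (S C : {set T}) : Prop :=
  exists2 x, x \in S & C = [set y in S | connect (induced e S) x y].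

Definition module_of (e : rel T) (S M : {set T}) : Prop :=
  M \subset S /\
  forall v, v \in S :\: M ->
    (forall m, m \in M -> e v m) \/ (forall m, m \in M -> ~~ e v m).

Definition max_proper_module (e : rel T) (S M : {set T}) : Prop :=
  [/\ module_of e S M, M != set0, M \proper S &
      forall M', module_of e S M' -> M \proper M' -> ~ M' \proper S].

(* md_depth_le e n S : the modular decomposition tree T(G[S]) has at most
   n layers (root in layer 1, a single-vertex graph has one layer). The four
   cases follow Gallai's theorem: single / parallel / serial / prime. *)
Fixpoint md_depth_le (e : rel T) (n : nat) (S : {set T}) : Prop :=
  match n with
  | 0 => False
  | n'.+1 =>
    if #|S| == 1 then True
    else if ~~ connected_in e S then
      forall C, component_of e S C -> md_depth_le e n' C
    else if ~~ connected_in (compl_rel e) S then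
      forall C, component_of (compl_rel e) S C -> md_depth_le e n' C
    else
      forall M, max_proper_module e S M -> md_depth_le e n' M
  end.

End Graphs.

(* First, a proper module M of a connected
   and co-connected claw-free graph is a clique: if b, c in M were
   non-adjacent, a vertex complete to M could not be adjacent to a vertex
   anticomplete to M (a claw with b and c), so by connectivity every vertex
   outside M is complete to M, and M would be a union of co-components.
   Second, a co-component of a graph with disconnected complement is dominated
   by any vertex of another co-component, and the components of a dominated
   disconnected graph are cliques.  Hence cliques have depth at most 2,
   dominated co-connected graphs at most 3, connected graphs at most 4, and
   every claw-free graph at most 5. *)

From mathcomp Require Import all_boot.
Set Implicit Arguments. Unset Strict Implicit. Unset Printing Implicit Defensive.

Section InducedSubgraphs.
Variable T : finType.
Implicit Types (r : rel T) (S X Y : {set T}).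

Lemma induced_sym r S : symmetric r -> symmetric (induced r S).
Proof. by move=> r_sym x y; rewrite /induced r_sym andbCA. Qed.

Lemma compl_rel_sym r : symmetric r -> symmetric (compl_rel r).
Proof. by move=> r_sym x y; rewrite /compl_rel r_sym eq_sym. Qed.

Lemma connect_induced_sym r S : symmetric r -> connect_sym (induced r S).
Proof. by move=> r_sym; apply/sym_connect_sym/induced_sym. Qed.

Lemma connected_inP r S x y :
  connected_in r S -> x \in S -> y \in S -> connect (induced r S) x y.
Proof.
by move=> /forall_inP conn xS yS; move/forall_inP: (conn x xS); apply.
Qed.

Lemma connect_induced_mem r S x y :
  x \in S -> connect (induced r S) x y -> y \in S.
Proof.
move=> xS /connectP[p pP ->]; elim: p x xS pP => //= z p IHp x _.
by case/andP=> /and3P[_ zS _]; apply: IHp.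
Qed.

Lemma connected_in_sub r S Y x : symmetric r -> connected_in r S ->
  x \in S -> x \in Y -> (forall a b, induced r S a b -> a \in Y -> b \in Y) ->
  S \subset Y.
Proof.
move=> r_sym conn xS xY Y_closed; apply/subsetP=> y yS.
have Y_cl := intro_closed (connect_induced_sym S r_sym) Y_closed.
by rewrite -(closed_connect Y_cl (connected_inP conn xS yS)).
Qed.

Lemma disconnected_inP r S x : symmetric r -> ~~ connected_in r S -> x \in S ->
  exists2 y, y \in S & ~~ connect (induced r S) x y.
Proof.
move=> r_sym /forall_inPn[y yS /forall_inPn[z zS not_yz]] xS.
have [xy|] := boolP (connect (induced r S) x y); last by exists y.
exists z => //; apply: contra not_yz; apply: connect_trans.
by rewrite connect_induced_sym.
Qed.

Lemma component_connected r S X :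
  symmetric r -> component_of r S X -> connected_in r X.
Proof.
move=> r_sym [x0 x0S ->]; set C := [set y in S | _].
have x0_C y : y \in C -> connect (induced r C) x0 y.
  rewrite inE => /andP[_ /connectP[p pP ->]].
  have pC : all (mem C) (x0 :: p).
    apply/allP=> z /(path_connect pP) x0z.
    by apply/setIdP; split; first exact: connect_induced_mem x0S x0z.
  apply/connectP; exists p => //; apply: (sub_in_path (P := mem C)) pC pP.
  by move=> a b aC bC /and3P[_ _ rab]; apply/and3P.
apply/forall_inP=> x xC; apply/forall_inP=> y yC.
by apply: connect_trans (x0_C y yC); rewrite connect_induced_sym ?x0_C.
Qed.

End InducedSubgraphs.

Section DecompositionDepth.
Variables (T : finType) (e : rel T).
Implicit Types (S X : {set T}).

Definition md_child S X : Prop :=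
  if ~~ connected_in e S then component_of e S X
  else if ~~ connected_in (compl_rel e) S then component_of (compl_rel e) S X
  else max_proper_module e S X.

Lemma md_depth_le_children n S :
  (forall X, md_child S X -> md_depth_le e n X) -> md_depth_le e n.+1 S.
Proof.
move=> children /=; case: ifP => // _; move: children; rewrite /md_child.
by case: ifP => _; last case: ifP => _; move=> children X /children.
Qed.

Lemma md_depth_le_succ n S : md_depth_le e n S -> md_depth_le e n.+1 S.
Proof.
elim: n S => [//|n IHn] S /=; case: ifP => // _.
by case: ifP => _; last case: ifP => _; move=> depth_n X /depth_n/IHn.
Qed.

Definition clique S := {in S &, forall x y, x != y -> e x y}.

Lemma clique_compl_connect S x y :
  clique S -> connect (induced (compl_rel e) S) x y -> x = y.
Proof.
move=> cliqueS /connectP[[|z p] /= pP ->] //.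
by case/andP: pP => /and3P[xS zS /andP[neq_xz /negP[]]]; apply: cliqueS.
Qed.

Lemma clique_depth S : clique S -> md_depth_le e 2 S.
Proof.
move=> cliqueS; apply: md_depth_le_children => X childX.
have conn : connected_in e S.
  apply/forall_inP=> x xS; apply/forall_inP=> y yS.
  have [-> //|neq_xy] := eqVneq x y.
  by apply: connect1; rewrite /induced xS yS cliqueS.
rewrite /md_child conn /= in childX.
case: ifP childX => [_ [x xS ->]|/negbFE coconn].
  have -> : [set y in S | connect (induced (compl_rel e) S) x y] = [set x].
    apply/setP=> y; rewrite !inE.
    by apply/andP/eqP => [[_ /(clique_compl_connect cliqueS) ->]|->].
  by rewrite /= cards1.
case=> [[XS _] /set0Pn[x xX] /properP[_ [y yS yX]] _].
have xS := subsetP XS x xX.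
have xy := clique_compl_connect cliqueS (connected_inP coconn xS yS).
by move: yX; rewrite -xy xX.
Qed.

End DecompositionDepth.

Section ClawFree.
Variables (T : finType) (e : rel T).
Hypotheses (e_sym : symmetric e) (e_claw_free : claw_free e).
Implicit Types (S M X : {set T}).

Definition dominated S := exists v, {in S, forall s, e v s}.

Lemma no_claw a b c d : e a b -> e a c -> e a d ->
  b != c -> b != d -> c != d -> ~~ e b c -> ~~ e b d -> ~~ e c d -> False.
Proof.
move=> eab eac ead neq_bc neq_bd neq_cd nbc nbd ncd.
by apply: e_claw_free; exists a, b, c, d; split=> //; apply/and3P.
Qed.

Lemma claw_free_module_complete S M b c :
  connected_in e S -> module_of e S M -> b \in M -> c \in M -> b != c ->
  ~~ e b c -> {in S :\: M, forall v, {in M, forall m, e v m}}.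
Proof.
move=> conn [MS modM] bM cM neq_bc nbc.
set A := [set v in S :\: M | [forall m in M, e v m]].
suff /subsetP SMA : S \subset M :|: A.
  move=> v /[dup] vSM /setDP[vS vM].
  by have := SMA v vS; rewrite in_setU (negbTE vM) inE vSM => /forall_inP.
apply: (connected_in_sub e_sym conn (subsetP MS b bM)); first by rewrite inE bM.
move=> a a' /and3P[_ a'S eaa'] aMA.
have [a'M|a'M] := boolP (a' \in M); first by rewrite inE a'M.
have a'SM : a' \in S :\: M by rewrite inE a'M a'S.
case: (modM a' a'SM) => [a'_complete|a'_anti].
  by rewrite in_setU inE a'SM; apply/orP; right; apply/forall_inP.
case/setUP: aMA => [aM|]; first by move: (a'_anti a aM); rewrite e_sym eaa'.
rewrite inE => /andP[_ /forall_inP a_complete]; exfalso.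
apply: (no_claw (a_complete b bM) (a_complete c cM) eaa' neq_bc).
- by apply: contraNneq a'M => <-.
- by apply: contraNneq a'M => <-.
- exact: nbc.
- by rewrite e_sym a'_anti.
- by rewrite e_sym a'_anti.
Qed.

Lemma prime_module_clique S M :
  connected_in e S -> connected_in (compl_rel e) S ->
  module_of e S M -> M \proper S -> clique e M.
Proof.
move=> conn coconn modM /properP[MS [z zS zM]] b c bM cM neq_bc.
apply/negPn/negP => nbc.
have complete := claw_free_module_complete conn modM bM cM neq_bc nbc.
have bS := subsetP MS b bM.
suff /subsetP/(_ z zS) : S \subset M by rewrite (negbTE zM).
apply: (connected_in_sub (compl_rel_sym e_sym) coconn bS bM).
move=> a a' /and3P[_ a'S /andP[_ neaa']] aM; apply: contraR neaa' => a'M.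
by rewrite e_sym complete // inE a'M a'S.
Qed.

Lemma dominated_component_clique S X :
  dominated S -> ~~ connected_in e S -> component_of e S X -> clique e X.
Proof.
move=> [v v_dom] disconn [x0 x0S ->] b c.
rewrite !inE => /andP[bS x0b] /andP[cS x0c] neq_bc; apply/negPn/negP => nbc.
have bc : connect (induced e S) b c.
  by apply: connect_trans x0c; rewrite connect_induced_sym.
have [d dS bd] := disconnected_inP e_sym disconn bS.
apply: (no_claw (v_dom b bS) (v_dom c cS) (v_dom d dS) neq_bc) => //.
- by apply: contraNneq bd => <-.
- by apply: contraNneq bd => <-.
- by apply: contra bd => ebd; apply: connect1; rewrite /induced bS dS.
- apply: contra bd => ecd; apply: connect_trans bc (connect1 _).
  by rewrite /induced cS dS.
Qed.

Lemma cocomponent_dominated S D :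
  ~~ connected_in (compl_rel e) S -> component_of (compl_rel e) S D ->
  dominated D.
Proof.
move=> codisconn [x0 x0S ->].
have [v vS x0v] := disconnected_inP (compl_rel_sym e_sym) codisconn x0S.
exists v => s; rewrite inE => /andP[sS x0s]; apply: contraR (x0v) => nvs.
apply: connect_trans (x0s) (connect1 _).
rewrite /induced sS vS /compl_rel e_sym nvs andbT /=.
by apply: contraNneq x0v => <-.
Qed.

Lemma dominated_depth S :
  dominated S -> connected_in (compl_rel e) S -> md_depth_le e 3 S.
Proof.
move=> dom coconn; apply: md_depth_le_children => X childX.
rewrite /md_child coconn /= in childX.
case: ifP childX => [disconn childX|/negbFE conn [modX _ properX _]];
  apply: clique_depth.
- exact: dominated_component_clique dom disconn childX.
- exact: prime_module_clique conn coconn modX properX.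
Qed.

Lemma connected_depth S : connected_in e S -> md_depth_le e 4 S.
Proof.
move=> conn; apply: md_depth_le_children => X childX.
rewrite /md_child conn /= in childX.
case: ifP childX => [codisconn childX|/negbFE coconn [modX _ properX _]].
  apply: dominated_depth; first exact: cocomponent_dominated codisconn childX.
  exact: component_connected (compl_rel_sym e_sym) childX.
apply/md_depth_le_succ/clique_depth.
exact: prime_module_clique conn coconn modX properX.
Qed.

End ClawFree.

Theorem corollary3 (T : finType) (e : rel T) :
  symmetric e -> irreflexive e -> 0 < #|T| -> claw_free e ->
  md_depth_le e 5 [set: T].
Proof.
move=> e_sym _ _ e_claw_free.
have [conn|disconn] := boolP (connected_in e [set: T]).
  exact/md_depth_le_succ/connected_depth.
apply: md_depth_le_children => X; rewrite /md_child disconn => childX.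
exact: connected_depth e_sym e_claw_free _ (component_connected e_sym childX).
Qed.
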